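(* Let $\underline x\in[0,1]^n$, and let $c_1,c_2$ be two parity checks (binary vectors of length $n$) with neighborhoods $N_1,N_2\subseteq\{1,\dots,n\}$ such that all parity-check constraints of $c_1$ and of $c_2$ are satisfied by $\underline x$. Let $c=c_1\oplus c_2$ be their modulo-2 sum, whose neighborhood is $N=(N_1\cup N_2)\setminus(N_1\cap N_2)$. If $c$ generates a cut at $\underline x$ (i.e. some parity-check constraint of $c$ is violated at $\underline x$), then $N_1\cap N_2$ contains at least two indices $i$ with $0<x_i<1$.
   Context: The neighborhood of a parity check $c\in\{0,1\}^n$ is $\{i: c_i=1\}$. The parity-check constraints of a check with neighborhood $N$ are $\sum_{i\in V}x_i-\sum_{i\in N\setminus V}x_i\le |V|-1$ for all odd-sized $V\subseteq N$. A check generates a cut at $\underline x$ if one of its parity-check constraints is violated at $\underline x$. *)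

From mathcomp Require Import all_boot all_order all_algebra.
Set Implicit Arguments. Unset Strict Implicit. Unset Printing Implicit Defensive.
Import Order.TTheory GRing.Theory Num.Theory.
Local Open Scope ring_scope.

Definition nbhd (n : nat) (c : 'I_n -> bool) : {set 'I_n} := [set i | c i].

Definition check_add (n : nat) (c1 c2 : 'I_n -> bool) : 'I_n -> bool :=
  fun i => xorb (c1 i) (c2 i).

Definition pc_constraint (R : numDomainType) (n : nat) (N V : {set 'I_n})
  (x : 'I_n -> R) : bool :=
  \sum_(i in V) x i - \sum_(i in N :\: V) x i <= (#|V|%:R - 1).

Definition satisfies_check (R : numDomainType) (n : nat) (c : 'I_n -> bool)
  (x : 'I_n -> R) : Prop :=
  forall V : {set 'I_n}, V \subset nbhd c -> odd #|V| ->
    pc_constraint (nbhd c) V x.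

Definition generates_cut (R : numDomainType) (n : nat) (c : 'I_n -> bool)
  (x : 'I_n -> R) : Prop :=
  exists V : {set 'I_n}, [/\ V \subset nbhd c, odd #|V| &
    ~~ pc_constraint (nbhd c) V x].

From mathcomp Require Import all_boot all_order all_algebra.
From mathcomp Require Import lra.
Set Implicit Arguments. Unset Strict Implicit. Unset Printing Implicit Defensive.
Import Order.TTheory GRing.Theory Num.Theory.
Local Open Scope ring_scope.

(* For U a subset of N let g(N, U) = sum_(i in U) (x_i - 1) - sum_(i in N \ U) x_i.
   The constraint of N indexed by V reads g(N, V) <= -1, and g <= 0 on [0,1]^n,
   so a check satisfied at x has g(N, U) <= -[odd |U|] for every U in N.
   Given V violating a constraint of c1 + c2, split V into its parts in N1 and
   N2 and complete them by shared indices: those with x_i = 1 go into both,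
   each fractional one into exactly one. This costs at most 1 per fractional
   index, g(N, V) <= g(N1, U1) + g(N2, U2) + #fractional, while
   |U1| + |U2| = |V| + #fractional (mod 2). With at most one fractional shared
   index it can be placed so that [odd |U1|] + [odd |U2|] >= #fractional + 1,
   forcing g(N, V) <= -1. *)

Lemma cardsIU_disjoint (T : finType) (V A S : {set T}) :
  [disjoint V & S] -> #|V :&: A :|: S| = (#|V :&: A| + #|S|)%N.
Proof.
move=> /disjoint_setI0 VS0.
by rewrite -cardsUI -setIA [A :&: S]setIC setIA VS0 set0I cards0 addn0.
Qed.

Lemma check_add_disjoint_shared n (c1 c2 : 'I_n -> bool) (V : {set 'I_n}) :
  V \subset nbhd (check_add c1 c2) -> [disjoint V & nbhd c1 :&: nbhd c2].
Proof.
move=> /subsetP sV; rewrite -setI_eq0; apply/eqP/setP => i.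
rewrite !inE; move: (sV i); rewrite inE /check_add.
by case: (i \in V) (c1 i) (c2 i) => [] [] [] // /(_ isT).
Qed.

Lemma card_check_add_split n (c1 c2 : 'I_n -> bool) (V : {set 'I_n}) :
  V \subset nbhd (check_add c1 c2) -> #|V| = (#|V :&: nbhd c1| + #|V :&: nbhd c2|)%N.
Proof.
move=> /subsetP sV; rewrite -(cardsID (nbhd c1) V); congr addn.
apply: eq_card => i; rewrite !inE; move: (sV i); rewrite inE /check_add.
by case: (i \in V) (c1 i) (c2 i) => [] [] [] // /(_ isT).
Qed.

Lemma odd_split_rounding (a1 a2 o f : nat) :
  odd (a1 + a2) -> (f <= 1)%N ->
  exists up : bool, (f + 1 <= odd (a1 + (o + up * f)) + odd (a2 + (o + ~~ up * f)))%N.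
Proof.
case: f => [|[|//]] odd_a _; exists (~~ odd (a1 + o)).
all: rewrite !oddD ?muln0 ?muln1 ?addn0 in odd_a *.
all: by case: (odd a1) odd_a; case: (odd a2); case: (odd o).
Qed.

Section ParityChecks.

Variables (R : realFieldType) (n : nat) (x : 'I_n -> R).
Hypothesis x01 : forall i, 0 <= x i <= 1.

Definition pc_term (N U : {set 'I_n}) (i : 'I_n) : R :=
  if i \in U then x i - 1 else if i \in N then - x i else 0.

Lemma sum_pc_term (N U : {set 'I_n}) :
  \sum_i pc_term N U i = \sum_(i in U) x i - \sum_(i in N :\: U) x i - #|U|%:R.
Proof.
rewrite -sumr_const (big_mkcond (mem U)) (big_mkcond (mem (N :\: U))).
rewrite (big_mkcond (mem U) (fun _ => 1)) -!sumrB; apply: eq_bigr => i _.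
by rewrite /pc_term !inE; case: (i \in U); case: (i \in N) => /=; lra.
Qed.

Lemma pc_constraintE (N U : {set 'I_n}) :
  pc_constraint N U x = (\sum_i pc_term N U i <= -1).
Proof. by rewrite sum_pc_term /pc_constraint; apply/idP/idP => ?; lra. Qed.

Lemma pc_term_le0 (N U : {set 'I_n}) i : pc_term N U i <= 0.
Proof.
by case/andP: (x01 i) => ? ?; rewrite /pc_term; case: (i \in U); case: (i \in N); lra.
Qed.

Lemma sum_pc_term_le_odd (c : 'I_n -> bool) (U : {set 'I_n}) :
  satisfies_check c x -> U \subset nbhd c ->
  \sum_i pc_term (nbhd c) U i <= - (odd #|U|)%:R.
Proof.
move=> xc sUc; case: (boolP (odd #|U|)) => [oddU | _].
  by rewrite -pc_constraintE; apply: xc.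
by rewrite oppr0; apply: sumr_le0 => i _; apply: pc_term_le0.
Qed.

Definition frac_shared (c1 c2 : 'I_n -> bool) : {set 'I_n} :=
  [set i in nbhd c1 :&: nbhd c2 | (0 < x i) && (x i < 1)].

Definition rounded_shared (c1 c2 : 'I_n -> bool) (up : bool) : {set 'I_n} :=
  [set i in nbhd c1 :&: nbhd c2 | if up then 0 < x i else 1 <= x i].

Lemma rounded_shared_sub (c1 c2 : 'I_n -> bool) (up : bool) :
  rounded_shared c1 c2 up \subset nbhd c1 :&: nbhd c2.
Proof. by apply/subsetP => i; rewrite inE => /andP[]. Qed.

Lemma card_rounded_shared (c1 c2 : 'I_n -> bool) (up : bool) :
  #|rounded_shared c1 c2 up| =
    (#|rounded_shared c1 c2 false| + up * #|frac_shared c1 c2|)%N.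
Proof.
case: up; last by rewrite addn0.
rewrite -(cardsID [set i | 1 <= x i]) mul1n; congr addn.
all: apply: eq_card => i; rewrite !inE; case: (c1 i); case: (c2 i) => //=.
all: by case: (lerP 1 (x i)); case: (ltrP 0 (x i)) => //= *; lra.
Qed.

Lemma sum_pc_term_check_add_le (c1 c2 : 'I_n -> bool) (V : {set 'I_n}) (up : bool) :
  V \subset nbhd (check_add c1 c2) ->
  \sum_i pc_term (nbhd (check_add c1 c2)) V i <=
    \sum_i pc_term (nbhd c1) (V :&: nbhd c1 :|: rounded_shared c1 c2 up) i
  + \sum_i pc_term (nbhd c2) (V :&: nbhd c2 :|: rounded_shared c1 c2 (~~ up)) i
  + #|frac_shared c1 c2|%:R.
Proof.
move=> /subsetP sV; rewrite -sumr_const (big_mkcond (mem (frac_shared c1 c2))) -!big_split /=.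
apply: ler_sum => i _; have := sV i; case/andP: (x01 i).
rewrite /pc_term /check_add !inE; move: (x i) => y y0 y1.
case: (c1 i); case: (c2 i); case: (i \in V) => [/(_ isT) // _ | _]; case: up => /=;
  by case: (ltrP 0 y); case: (lerP 1 y) => /=; lra.
Qed.

Lemma card_check_add_rounded (c1 c2 : 'I_n -> bool) (V A : {set 'I_n}) (up : bool) :
  V \subset nbhd (check_add c1 c2) ->
  #|V :&: A :|: rounded_shared c1 c2 up| =
    (#|V :&: A| + (#|rounded_shared c1 c2 false| + up * #|frac_shared c1 c2|))%N.
Proof.
move=> sV; rewrite cardsIU_disjoint; first by rewrite card_rounded_shared.
by rewrite (disjointWr (rounded_shared_sub c1 c2 up)) ?check_add_disjoint_shared.
Qed.

End ParityChecks.

Theorem lemma2 (R : realFieldType) (n : nat) (x : 'I_n -> R)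
  (c1 c2 : 'I_n -> bool) :
  (forall i, 0 <= x i <= 1) ->
  satisfies_check c1 x -> satisfies_check c2 x ->
  generates_cut (check_add c1 c2) x ->
  (1 < #|[set i in nbhd c1 :&: nbhd c2 | ((0 < x i) && (x i < 1))%R]|)%N.
Proof.
move=> x01 xc1 xc2 [V [sV oddV cutV]].
rewrite ltnNge -/(frac_shared x c1 c2); apply/negP => frac_le1.
have oddV12 : odd (#|V :&: nbhd c1| + #|V :&: nbhd c2|).
  by rewrite -(card_check_add_split sV).
have [up odd_ge] :=
  odd_split_rounding #|rounded_shared x c1 c2 false| oddV12 frac_le1.
set U1 := V :&: nbhd c1 :|: rounded_shared x c1 c2 up.
set U2 := V :&: nbhd c2 :|: rounded_shared x c1 c2 (~~ up).
have le1 : \sum_i pc_term x (nbhd c1) U1 i <= - (odd #|U1|)%:R.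
  apply: sum_pc_term_le_odd => //; rewrite subUset subsetIr.
  exact: subset_trans (rounded_shared_sub _ _ _ _) (subsetIl _ _).
have le2 : \sum_i pc_term x (nbhd c2) U2 i <= - (odd #|U2|)%:R.
  apply: sum_pc_term_le_odd => //; rewrite subUset subsetIr.
  exact: subset_trans (rounded_shared_sub _ _ _ _) (subsetIr _ _).
have := sum_pc_term_check_add_le x01 up sV.
move: cutV odd_ge; rewrite pc_constraintE -ltNge.
rewrite -!(card_check_add_rounded _ _ _ sV) -(ler_nat R) !natrD -/U1 -/U2.
move=> cut_sum odd_ge dominated; lra.
Qed.
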